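(* Let $r \geq 1$ be an integer and define $f \in \mathbb{Z}^{2r+1}$ by $f_1 = f_2 = f_3 = 1$ and $f_i = f_{i-2} + f_{i-1}$ for $i = 4, \ldots, 2r+1$. Then for every integer $\tau$ with $0 \leq \tau \leq \sum_{i=1}^{2r+1} f_i$, there exists a subset $S \subseteq \{1, \ldots, 2r+1\}$ such that $\tau = \sum_{i \in S} f_i$. *)

From mathcomp Require Import all_boot.
Set Implicit Arguments. Unset Strict Implicit. Unset Printing Implicit Defensive.

(* fseq i = f_i (1-indexed): f_1 = f_2 = f_3 = 1, f_i = f_{i-2} + f_{i-1} for i >= 4.
   fseq 0 is an unused junk value (0). *)
Fixpoint fseq (i : nat) : nat :=
  match i with
  | 0 => 0
  | k.+1 =>
    match k with
    | 0 | 1 | 2 => 1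
    | j.+1 => fseq j + fseq k
    end
  end.

Lemma fseq_check : [seq fseq i | i <- iota 1 7] = [:: 1;1;1;2;3;5;8]. Proof. by []. Qed.

From mathcomp Require Import all_boot.

(* The sequence f is complete: each term exceeds the sum of the preceding ones
   by at most 1 (for k >= 3, f_{k+1} = f_{k-1} + f_k).  For such a sequence every
   tau up to the total sum is a subset sum, by induction on the length: if tau
   fits under the sum of the first n terms use the induction hypothesis,
   otherwise tau >= a_n, so take a_n and represent tau - a_n. *)

Section CompleteSequence.

Variable a : nat -> nat.
Hypothesis a_le_sum_succ : forall k, a k <= (\sum_(i < k) a i).+1.

Lemma complete_subset_sum n tau : tau <= \sum_(i < n) a i ->
  exists P : pred nat, tau = \sum_(i < n | P i) a i.
Proof.
elim: n tau => [|n IHn] tau.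
  by rewrite big_ord0 leqn0 => /eqP ->; exists pred0; rewrite big_pred0.
have sum_recr (P : pred nat) :
    \sum_(i < n.+1 | P i) a i = \sum_(i < n | P i) a i + (if P n then a n else 0).
  by rewrite big_mkcond big_ord_recr -big_mkcond.
have lt_n (i : 'I_n) : (i == n :> nat) = false by rewrite ltn_eqF.
rewrite big_ord_recr /= => tau_le.
have [tau_le_n | tau_gt_n] := leqP tau (\sum_(i < n) a i).
  have [P ->] := IHn _ tau_le_n.
  exists [pred i | P i && (i != n)]; rewrite sum_recr /= eqxx andbF addn0.
  by apply: eq_bigl => i; rewrite lt_n andbT.
have an_le_tau : a n <= tau := leq_trans (a_le_sum_succ n) tau_gt_n.
have rest_le : tau - a n <= \sum_(i < n) a i by rewrite leq_subLR addnC.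
have [P P_sum] := IHn _ rest_le.
exists [pred i | (i == n) || P i]; rewrite sum_recr /= eqxx.
rewrite (eq_bigl (fun i : 'I_n => P i)) => [|i]; last by rewrite lt_n.
by rewrite -P_sum subnK.
Qed.

End CompleteSequence.

Lemma fseqSSSS k : fseq k.+4 = fseq k.+2 + fseq k.+3.
Proof. by []. Qed.

Lemma fseq_le_sum_succ k : fseq k.+1 <= (\sum_(i < k) fseq i.+1).+1.
Proof.
case: k => [|[|[|k]]]; try by rewrite ?big_ord_recr big_ord0.
by rewrite fseqSSSS !big_ord_recr /= -addnA leqW ?leq_addl.
Qed.

(* Indices {1,...,2r+1} are represented by i : 'I_(2r+1), standing for i+1. *)
Theorem lemma2 (r : nat) (hr : 1 <= r) (tau : nat)
  (htau : tau <= \sum_(i < 2 * r + 1) fseq i.+1) :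
  exists S : {set 'I_(2 * r + 1)}, tau = \sum_(i in S) fseq i.+1.
Proof.
have [P ->] := complete_subset_sum _ fseq_le_sum_succ _ _ htau.
by exists [set i : 'I_(2 * r + 1) | P i]; apply: eq_bigl => i; rewrite inE.
Qed.
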